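(* With the height $H$ and distance $d$ on $Y_4$ described in the context, one has $$\alpha(Q,Y_4)=\alpha_{\mathrm{ess}}(Q)=2 .$$ Consequently $Y_4$ contains no locally accumulating subvariety for $Q$.
   Context: Let $Y_4$ be the smooth projective toric surface over $\mathbb{Q}$ obtained by blowing up $\mathbb{P}^1\times\mathbb{P}^1$ (coordinates $[x:y]\times[s:t]$) at the four torus-invariant points $[1:0]\times[1:0]$, $[0:1]\times[1:0]$, $[1:0]\times[0:1]$, $[0:1]\times[0:1]$; outside the exceptional divisors we keep the coordinates $[x:y]\times[s:t]$. Let $Q$ be the point lying over $[1:1]\times[1:1]$. For a rational point $P=[x:y]\times[s:t]$ off the exceptional divisors, written with integers satisfying $\gcd(x,y)=\gcd(s,t)=1$, the anticanonical Weil height is $$H(P)=\frac{\max(|x^2st|,|y^2st|,|t^2xy|,|s^2xy|)}{\gcd(x,s)\gcd(x,t)\gcd(y,s)\gcd(y,t)}.$$ Near $Q$ use affine coordinates $(w,z)=(y/x,t/s)$, the local diffeomorphism $\rho(P)=(w-1,z-1)\in\mathbb{R}^2$ and the distance $d(P)=\max(|w-1|,|z-1|)$. For a constructible subset $V\subset Y_4$, the approximation constant $\alpha(Q,V)$ is the supremum of the $\gamma>0$ for which there exists $C>0$ with $d(P)^\gamma H(P)\ge C$ for all $P\in V(\mathbb{Q})$, $P\neq Q$ (equivalently the infimum of the $\gamma>0$ for which there is a sequence $P_i\in V(\mathbb{Q})$ with $d(P_i)\to0$ and $d(P_i)^\gamma H(P_i)$ bounded). The essential constant is $\alpha_{\mathrm{ess}}(Q)=\sup_V\alpha(Q,V)$,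 $V$ ranging over dense Zariski open subsets of $Y_4$. A subvariety $Z$ is locally accumulating if $\alpha(Q,W)<\alpha_{\mathrm{ess}}(Q)$ for every dense open $W\subset Z$. *)

From Stdlib Require Import Reals ZArith QArith Qreals List.
Open Scope R_scope.

(** A rational point [x:y] x [s:t] of Y_4 off the exceptional divisors,
    given by integer coordinates (the representative is unique up to the
    signs of (x,y) and of (s,t); all quantities below are sign-invariant). *)
Record pt := mkPt { px : Z; py : Z; ps : Z; pt_ : Z }.

(** gcd(x,y) = gcd(s,t) = 1, and P is not one of the four blown-up points. *)
Definition valid (P : pt) : Prop :=
  Z.gcd (px P) (py P) = 1%Z /\ Z.gcd (ps P) (pt_ P) = 1%Z /\
  ~ ((px P = 0 \/ py P = 0) /\ (ps P = 0 \/ pt_ P = 0))%Z.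

(** Rational points of Y_4 (those off the exceptional divisors; points on
    the exceptional divisors are far from Q and play no role). *)
Definition Y4 (P : pt) : Prop := valid P.

(** the affine chart (w,z) = (y/x, t/s) around Q *)
Definition in_chart (P : pt) : Prop := px P <> 0%Z /\ ps P <> 0%Z.
Definition in_torus (P : pt) : Prop :=
  px P <> 0%Z /\ py P <> 0%Z /\ ps P <> 0%Z /\ pt_ P <> 0%Z.

Definition wcoord (P : pt) : R := IZR (py P) / IZR (px P).
Definition zcoord (P : pt) : R := IZR (pt_ P) / IZR (ps P).

Definition isQ (P : pt) : Prop := py P = px P /\ pt_ P = ps P.

Definition dist (P : pt) : R :=
  Rmax (Rabs (wcoord P - 1)) (Rabs (zcoord P - 1)).

(** anticanonical height *)
Definition height (P : pt) : R :=
  let x := px P in let y := py P in let s := ps P in let t := pt_ P in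
  IZR (Z.max (Z.max (Z.abs (x*x*s*t)) (Z.abs (y*y*s*t)))
             (Z.max (Z.abs (t*t*x*y)) (Z.abs (s*s*x*y))))
  / IZR (Z.gcd x s * Z.gcd x t * Z.gcd y s * Z.gcd y t).

Definition admissible (V : pt -> Prop) (g : R) : Prop :=
  0 < g /\
  exists Pn : nat -> pt,
    (forall n, V (Pn n) /\ valid (Pn n) /\ in_chart (Pn n) /\ ~ isQ (Pn n)) /\
    Un_cv (fun n => dist (Pn n)) 0 /\
    exists B, forall n, Rabs (Rpower (dist (Pn n)) g * height (Pn n)) <= B.

(** alpha(Q,V) is the infimum (in [0,+oo]) of the admissible gamma.
    We express comparisons of alpha(Q,V) with a real number a literally. *)
Definition alpha_le (V : pt -> Prop) (a : R) : Prop :=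
  forall b, a < b -> exists g, admissible V g /\ g < b.
Definition alpha_ge (V : pt -> Prop) (a : R) : Prop :=
  forall g, admissible V g -> a <= g.
Definition alpha_lt (V : pt -> Prop) (a : R) : Prop :=
  exists g, admissible V g /\ g < a.
Definition alpha_eq (V : pt -> Prop) (a : R) : Prop :=
  alpha_le V a /\ alpha_ge V a.

(** Polynomials in Q[w,z] (coefficients indexed by exponents i,j <= pdeg). *)
Record poly2 := mkPoly2 { pdeg : nat; pcoef : nat -> nat -> Q }.

Definition peval (f : poly2) (w z : R) : R :=
  sum_f_R0 (fun i => sum_f_R0 (fun j => Q2R (pcoef f i j) * w ^ i * z ^ j)
                              (pdeg f)) (pdeg f).

Definition pnonzero (f : poly2) : Prop :=
  exists i j, (i <= pdeg f)%nat /\ (j <= pdeg f)%nat /\ ~ (pcoef f i j == 0)%Q.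

Definition evalP (f : poly2) (P : pt) : R := peval f (wcoord P) (zcoord P).

(** Open subset D(S) of the torus: points where some f in S does not vanish.
    It is a dense open subset of Y_4 iff some f in S is a nonzero polynomial. *)
Definition dopen (S : list poly2) (P : pt) : Prop :=
  valid P /\ in_torus P /\ exists f, In f S /\ evalP f P <> 0.

Definition dense_family (S : list poly2) : Prop :=
  exists f, In f S /\ pnonzero f.

(** alpha_ess(Q) = sup over dense open V of alpha(Q,V) equals a. *)
Definition alpha_ess_eq (a : R) : Prop :=
  (forall S, dense_family S -> alpha_le (dopen S) a) /\
  (forall b, b < a -> exists S, dense_family S /\
                        exists c, b < c /\ alpha_ge (dopen S) c).

Definition closedZ (S : list poly2) (P : pt) : Prop :=
  valid P /\ in_torus P /\ forall f, In f S -> evalP f P = 0.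

(** W = Z cap D(T) is (Zariski-)dense in Z: every polynomial vanishing on
    W vanishes on Z. *)
Definition dense_in_closed (S T : list poly2) : Prop :=
  forall g : poly2,
    (forall P, closedZ S P -> dopen T P -> evalP g P = 0) ->
    forall P, closedZ S P -> evalP g P = 0.

Definition locally_accumulating (S : list poly2) : Prop :=
  exists a, alpha_ess_eq a /\
    forall T, dense_in_closed S T ->
      alpha_lt (fun P => closedZ S P /\ dopen T P) a.

From Pilot Require Import Defs.
From Stdlib Require Import Reals ZArith QArith Qreals List Lra Lia Psatz Classical ClassicalEpsilon.
Open Scope R_scope.

(* Lower bound: if w <> 1 then d(P) >= 1/|x|, if z <> 1 then d(P) >= 1/|s|, and
   the gcd denominator of H(P) is at most sqrt|xyst|; together d(P)^2 H(P) >= 1,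
   so no exponent below 2 is admissible on any subset.

   Upper bound: for d = m^2 - 1 and a solution of q^2 - d u^2 = 1 put
   v = d u - q and p = q - u.  The point [uv : uv + 1] x [dup : dup - 1] satisfies
   uv + 1 = pq and dup - 1 = vq, so its gcd denominator is at least uvpq and
   d(P)^2 H(P) stays bounded along the Pell solutions.  These points lie on the
   rational conic s (s - 1) = d x (x + 1); if a polynomial vanished on all but
   finitely many of them for every m, it would vanish on all these conics, hence
   identically.  So every dense open set still contains such a sequence, and
   alpha_ess(Q) = 2 as well; a locally accumulating subvariety would need an
   exponent below 2. *)

(* [deg_le n phi]: [phi] is a real polynomial function of degree at most [n],
   stated through iterated division by [t - a] so that no coefficients appear. *)
Fixpoint deg_le (n : nat) (phi : R -> R) : Prop :=
  match n with
  | O => forall t, phi t = phi 0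
  | S n' => forall a, exists psi, deg_le n' psi /\ forall t, phi t = phi a + (t - a) * psi t
  end.

Lemma deg_le_ext n : forall phi chi, deg_le n phi -> (forall t, phi t = chi t) -> deg_le n chi.
Proof.
  induction n as [|n IH]; simpl; intros phi chi H E.
  - intro t; rewrite <- !E; apply H.
  - intro a; destruct (H a) as [psi [Hpsi Ht]]; exists psi; split; auto.
    intro t; rewrite <- !E; apply Ht.
Qed.

Lemma deg_le_const n c : deg_le n (fun _ => c).
Proof.
  revert c; induction n as [|n IH]; simpl; intros c; auto.
  intro; exists (fun _ => 0); split; auto. intro; ring.
Qed.

Lemma deg_le_succ n : forall phi, deg_le n phi -> deg_le (S n) phi.
Proof.
  induction n as [|n IH]; intros phi H a.
  - exists (fun _ => 0); split; [apply deg_le_const|].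
    intro t; simpl in H; rewrite (H t), (H a); ring.
  - destruct (H a) as [psi [Hpsi Ht]]; exists psi; split; auto.
Qed.

Lemma deg_le_weaken n m phi : (n <= m)%nat -> deg_le n phi -> deg_le m phi.
Proof. induction 1; auto using deg_le_succ. Qed.

Lemma deg_le_id : deg_le 1 (fun t => t).
Proof. intro a; exists (fun _ => 1); split; [apply deg_le_const|intro; ring]. Qed.

Lemma deg_le_add n : forall phi chi, deg_le n phi -> deg_le n chi ->
  deg_le n (fun t => phi t + chi t).
Proof.
  induction n as [|n IH]; simpl; intros phi chi H1 H2.
  - intro t; rewrite H1, H2; auto.
  - intro a; destruct (H1 a) as [p1 [Hp1 Ht1]], (H2 a) as [p2 [Hp2 Ht2]].
    exists (fun t => p1 t + p2 t); split; auto.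
    intro t; rewrite Ht1, Ht2; ring.
Qed.

Lemma deg_le_scal n : forall c phi, deg_le n phi -> deg_le n (fun t => c * phi t).
Proof.
  induction n as [|n IH]; simpl; intros c phi H.
  - intro t; rewrite H; auto.
  - intro a; destruct (H a) as [p [Hp Ht]].
    exists (fun t => c * p t); split; auto.
    intro t; rewrite Ht; ring.
Qed.

Lemma deg_le_mul n : forall m phi chi, deg_le n phi -> deg_le m chi ->
  deg_le (n + m) (fun t => phi t * chi t).
Proof.
  induction n as [|n IH]; intros m phi chi H1 H2.
  - apply (deg_le_ext _ (fun t => phi 0 * chi t)); [apply deg_le_scal; auto|].
    intro t; simpl in H1; rewrite (H1 t); auto.
  - destruct m as [|m].
    + rewrite Nat.add_0_r.
      apply (deg_le_ext _ (fun t => chi 0 * phi t)); [apply deg_le_scal; auto|].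
      intro t; simpl in H2; rewrite (H2 t); ring.
    + intro a; destruct (H1 a) as [p1 [Hp1 Ht1]], (H2 a) as [p2 [Hp2 Ht2]].
      exists (fun t => p1 t * chi t + phi a * p2 t); split.
      * apply deg_le_add; [apply IH; auto|].
        apply (deg_le_weaken m); [lia|]. apply deg_le_scal; auto.
      * intro t; rewrite (Ht1 t), Rmult_plus_distr_r, (Ht2 t) at 1; ring.
Qed.

Lemma deg_le_pow n k : forall phi, deg_le n phi -> deg_le (n * k) (fun t => phi t ^ k).
Proof.
  induction k as [|k IH]; intros phi H.
  - exact (deg_le_const _ 1).
  - replace (n * S k)%nat with (n + n * k)%nat by lia.
    apply (deg_le_mul n (n * k) phi (fun t => phi t ^ k)); auto.
Qed.

Lemma deg_le_monomial n k a : (k <= n)%nat -> deg_le n (fun t => a * t ^ k).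
Proof.
  intro Hk; apply deg_le_scal, (deg_le_weaken (1 * k)); [lia|].
  apply deg_le_pow, deg_le_id.
Qed.

Lemma deg_le_sum n N : forall F : nat -> R -> R,
  (forall i, (i <= N)%nat -> deg_le n (F i)) ->
  deg_le n (fun t => sum_f_R0 (fun i => F i t) N).
Proof.
  induction N as [|N IH]; intros F H; simpl.
  - apply H; lia.
  - apply deg_le_add; [apply IH; intros; apply H|apply H]; lia.
Qed.

Lemma deg_le_eq0 n : forall phi (g : nat -> R), deg_le n phi ->
  (forall i j, (i <= n)%nat -> (j <= n)%nat -> i <> j -> g i <> g j) ->
  (forall i, (i <= n)%nat -> phi (g i) = 0) -> forall t, phi t = 0.
Proof.
  induction n as [|n IH]; intros phi g H Hg Hroot t.
  - simpl in H; rewrite H, <- (H (g 0%nat)); apply Hroot; lia.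
  - destruct (H (g (S n))) as [psi [Hpsi Ht]].
    assert (Hpsi0 : forall t, psi t = 0).
    { apply (IH psi g Hpsi); [intros; apply Hg; lia|].
      intros i Hi; assert (E := Ht (g i)).
      rewrite !Hroot, Rplus_0_l in E by lia.
      destruct (Rmult_integral _ _ (eq_sym E)) as [E'|E']; auto.
      exfalso; apply (Hg i (S n)); lia || lra. }
    rewrite Ht, Hpsi0, Hroot by lia; ring.
Qed.

Lemma poly_sum_succ (a : nat -> R) t n :
  sum_f_R0 (fun i => a i * t ^ i) (S n) = a 0%nat + t * sum_f_R0 (fun i => a (S i) * t ^ i) n.
Proof.
  rewrite decomp_sum by lia; simpl pred; rewrite scal_sum.
  f_equal; [simpl; ring|]. apply sum_eq; intros; simpl; ring.
Qed.

Lemma poly_coef_eq0 n : forall a : nat -> R,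
  (forall t, 1 < t -> sum_f_R0 (fun i => a i * t ^ i) n = 0) ->
  forall i, (i <= n)%nat -> a i = 0.
Proof.
  induction n as [|n IH]; intros a H i Hi.
  - replace i with 0%nat by lia. assert (E := H 2 ltac:(lra)); simpl in E; lra.
  - assert (Hzero : forall t, sum_f_R0 (fun i => a i * t ^ i) (S n) = 0).
    { apply (deg_le_eq0 (S n) _ (fun i => INR i + 2)).
      - apply deg_le_sum; intros; apply deg_le_monomial; lia.
      - intros i0 j0 _ _ Hne E; apply Hne, INR_eq; lra.
      - intros i0 _; apply H; pose proof (pos_INR i0); lra. }
    assert (Ha0 : a 0%nat = 0).
    { assert (E := Hzero 0); rewrite poly_sum_succ in E; lra. }
    destruct i as [|i]; auto.
    apply (IH (fun i => a (S i))); [|lia].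
    intros t Ht; assert (E := H t Ht); rewrite poly_sum_succ, Ha0 in E.
    rewrite Rplus_0_l in E; destruct (Rmult_integral _ _ E); lra.
Qed.

Definition bihom (f : poly2) (a b c e : R) : R :=
  sum_f_R0 (fun i => sum_f_R0 (fun j =>
     Q2R (pcoef f i j) * (a ^ i * b ^ (pdeg f - i)) * (c ^ j * e ^ (pdeg f - j)))
     (pdeg f)) (pdeg f).

Lemma Rpow_div a b n : b <> 0 -> (a / b) ^ n = a ^ n / b ^ n.
Proof.
  intro Hb; induction n as [|n IH]; simpl; [field|].
  rewrite IH; field; split; auto using pow_nonzero.
Qed.

Lemma pow_split b i D : (i <= D)%nat -> b ^ D = b ^ i * b ^ (D - i).
Proof. intro H; rewrite <- pow_add; f_equal; lia. Qed.

Lemma bihom_peval f a b c e : b <> 0 -> e <> 0 ->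
  bihom f a b c e = b ^ pdeg f * e ^ pdeg f * peval f (a / b) (c / e).
Proof.
  intros Hb He; unfold bihom, peval.
  rewrite scal_sum; apply sum_eq; intros i Hi.
  rewrite (Rmult_comm (sum_f_R0 _ _)), scal_sum; apply sum_eq; intros j Hj.
  rewrite !Rpow_div, (pow_split b i (pdeg f)), (pow_split e j (pdeg f)) by auto.
  field; split; apply pow_nonzero; auto.
Qed.

Lemma bihom_scale f a b c e l m :
  bihom f (l * a) (l * b) (m * c) (m * e) = l ^ pdeg f * m ^ pdeg f * bihom f a b c e.
Proof.
  unfold bihom; rewrite scal_sum; apply sum_eq; intros i Hi.
  rewrite (Rmult_comm (sum_f_R0 _ _)), scal_sum; apply sum_eq; intros j Hj.
  rewrite !Rpow_mult_distr, (pow_split l i (pdeg f)), (pow_split m j (pdeg f)) by auto.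
  ring.
Qed.

Lemma deg_le_bihom f k A B C E :
  deg_le k A -> deg_le k B -> deg_le k C -> deg_le k E ->
  deg_le (2 * k * pdeg f) (fun t => bihom f (A t) (B t) (C t) (E t)).
Proof.
  intros HA HB HC HE; unfold bihom.
  apply deg_le_sum; intros i Hi; apply deg_le_sum; intros j Hj.
  apply (deg_le_weaken (k * i + k * (pdeg f - i) + (k * j + k * (pdeg f - j)))).
  { rewrite <- !Nat.mul_add_distr_l; nia. }
  apply deg_le_mul; [apply deg_le_scal|]; apply deg_le_mul; apply deg_le_pow; auto.
Qed.

Lemma peval_coef_eq0 f : (forall w z, 1 < w -> 1 < z -> peval f w z = 0) ->
  forall i j, (i <= pdeg f)%nat -> (j <= pdeg f)%nat -> Q2R (pcoef f i j) = 0.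
Proof.
  intros H i j Hi Hj.
  assert (Hrow : forall z, 1 < z -> forall i, (i <= pdeg f)%nat ->
     sum_f_R0 (fun j => Q2R (pcoef f i j) * z ^ j) (pdeg f) = 0).
  { intros z Hz; apply poly_coef_eq0; intros w Hw.
    rewrite <- (H w z Hw Hz); unfold peval; apply sum_eq; intros k _.
    rewrite Rmult_comm, scal_sum; apply sum_eq; intros l _; ring. }
  revert j Hj; apply poly_coef_eq0; intros z Hz; apply Hrow; auto.
Qed.

Lemma deg_le_quartic a0 a1 a2 a3 a4 :
  deg_le 4 (fun r => a0 + a1 * r + a2 * r ^ 2 + a3 * r ^ 3 + a4 * r ^ 4).
Proof.
  repeat apply deg_le_add; try (apply deg_le_monomial; lia); [apply deg_le_const|].
  apply (deg_le_ext _ _ _ (deg_le_monomial 4 1 a1 ltac:(lia))); intro; ring.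
Qed.

(* r = u / (q + 1) parametrizes the conic q^2 - d u^2 = 1, with 2 / (q + 1) = conic_den;
   conic_x and conic_s are x = u (d u - q) and s = d u (q - u) times conic_den^2. *)
Definition conic_den (d r : R) := 1 - d * (r * r).
Definition conic_x (d r : R) := 2 * r * (2 * d * r - 1 - d * (r * r)).
Definition conic_s (d r : R) := 2 * d * r * (1 + d * (r * r) - 2 * r).

Definition pullback (d : R) (f : poly2) (r : R) :=
  bihom f (conic_x d r + conic_den d r ^ 2) (conic_x d r)
          (conic_s d r - conic_den d r ^ 2) (conic_s d r).

Lemma deg_le_pullback d f : deg_le (2 * 4 * pdeg f) (pullback d f).
Proof.
  unfold pullback, conic_x, conic_s, conic_den; apply deg_le_bihom.
  - apply (deg_le_ext _ _ _ (deg_le_quartic 1 (-2) (2 * d) (-2 * d) (d * d))); intro; ring.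
  - apply (deg_le_ext _ _ _ (deg_le_quartic 0 (-2) (4 * d) (-2 * d) 0)); intro; ring.
  - apply (deg_le_ext _ _ _ (deg_le_quartic (-1) (2 * d) (-2 * d) (2 * d * d) (- (d * d))));
      intro; ring.
  - apply (deg_le_ext _ _ _ (deg_le_quartic 0 (2 * d) (-4 * d) (2 * d * d) 0)); intro; ring.
Qed.

Section ConicParam.

Variables d q u : R.
Hypotheses (Hu : u <> 0) (Hq : q + 1 <> 0) (Hpell : q * q - d * u * u = 1).

Lemma conic_param :
  conic_den d (u / (q + 1)) = 2 / (q + 1) /\
  conic_x d (u / (q + 1)) = (2 / (q + 1)) ^ 2 * (u * (d * u - q)) /\
  conic_s d (u / (q + 1)) = (2 / (q + 1)) ^ 2 * (d * u * (q - u)).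
Proof.
  assert (E : d = (q * q - 1) / (u * u)) by (field_simplify_eq; [lra|auto]).
  unfold conic_den, conic_x, conic_s; rewrite E; repeat split; field; auto.
Qed.

Lemma pullback_conic_param f :
  pullback d f (u / (q + 1)) =
  ((2 / (q + 1)) ^ 2) ^ pdeg f * ((2 / (q + 1)) ^ 2) ^ pdeg f *
  bihom f (u * (d * u - q) + 1) (u * (d * u - q)) (d * u * (q - u) - 1) (d * u * (q - u)).
Proof.
  destruct conic_param as [E1 [E2 E3]].
  unfold pullback; rewrite E1, E2, E3, <- bihom_scale; f_equal; simpl; field; auto.
Qed.

Lemma conic_param_u : 2 * (u / (q + 1)) / conic_den d (u / (q + 1)) = u.
Proof. destruct conic_param as [E _]; rewrite E; field; auto. Qed.

End ConicParam.

(* The Pell points lie on s (s - 1) = d x (x + 1): x = u v, x + 1 = p q, s = d u p, s - 1 = v q. *)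
Definition conic_root (d x : R) := (1 + sqrt (1 + 4 * d * x * (x + 1))) / 2.

Lemma conic_root_spec d x : 0 <= d -> 0 < x ->
  conic_root d x * conic_root d x - conic_root d x = d * x * (x + 1) /\ 1 <= conic_root d x.
Proof.
  intros Hd Hx; unfold conic_root.
  assert (Hdx : 0 <= 4 * d * x * (x + 1)) by (repeat apply Rmult_le_pos; lra).
  pose proof (sqrt_sqrt (1 + 4 * d * x * (x + 1)) ltac:(lra)).
  assert (1 <= sqrt (1 + 4 * d * x * (x + 1))).
  { apply Rle_trans with (sqrt 1); [rewrite sqrt_1; lra|apply sqrt_le_1_alt; lra]. }
  split; nra.
Qed.

Lemma conic_root_inj d d' x : 0 <= d -> 0 <= d' -> 0 < x ->
  conic_root d x = conic_root d' x -> d = d'.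
Proof.
  intros Hd Hd' Hx E; unfold conic_root in E.
  assert (0 < 4 * x * (x + 1)) by (apply Rmult_lt_0_compat; lra).
  assert (E' : sqrt (1 + 4 * d * x * (x + 1)) = sqrt (1 + 4 * d' * x * (x + 1))) by lra.
  apply sqrt_inj in E'; nra.
Qed.

Lemma conic_param_surj d x : 3 <= d -> 0 < x ->
  exists q u, 0 < u /\ 0 < q /\ q * q - d * u * u = 1 /\ u * (d * u - q) = x /\
     d * u * (q - u) = conic_root d x.
Proof.
  intros Hd Hx; destruct (conic_root_spec d x ltac:(lra) Hx) as [ES HS].
  set (S := conic_root d x) in *.
  set (U := (S + d * x) / (d * (d - 1))).
  assert (HU : 0 < U) by (unfold U; apply Rdiv_lt_0_compat; nra).
  set (u := sqrt U).
  assert (Hu : 0 < u) by (apply sqrt_lt_R0; auto).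
  assert (Hu2 : u * u = U) by (apply sqrt_sqrt; lra).
  set (q := (S + x) / ((d - 1) * u)).
  assert (Hq : 0 < q) by (unfold q; apply Rdiv_lt_0_compat; nra).
  assert (Hqu : q * u = (S + x) / (d - 1)) by (unfold q; field; lra).
  exists q, u; repeat split; auto.
  - apply Rmult_eq_reg_r with (u * u); [|nra].
    replace ((q * q - d * u * u) * (u * u)) with ((q * u) * (q * u) - d * (u * u) * (u * u))
      by ring.
    rewrite Hqu, Hu2; unfold U; field_simplify_eq; [nra|lra].
  - replace (u * (d * u - q)) with (d * (u * u) - q * u) by ring.
    rewrite Hqu, Hu2; unfold U; field; lra.
  - replace (d * u * (q - u)) with (d * (q * u) - d * (u * u)) by ring.
    rewrite Hqu, Hu2; unfold U; field; lra.
Qed.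

Lemma gcd_ge_divisor (a b c : Z) : (0 < c)%Z -> (c | a)%Z -> (c | b)%Z -> a <> 0%Z ->
  (c <= Z.gcd a b)%Z.
Proof.
  intros Hc Ha Hb Ha0; apply Z.divide_pos_le; [|apply Z.gcd_greatest; auto].
  pose proof (Z.gcd_nonneg a b); pose proof (Z.gcd_eq_0_l a b); lia.
Qed.

Definition height_num (x y s t : Z) : Z :=
  Z.max (Z.max (Z.abs (x * x * s * t)) (Z.abs (y * y * s * t)))
        (Z.max (Z.abs (t * t * x * y)) (Z.abs (s * s * x * y))).

Definition height_den (x y s t : Z) : Z := Z.gcd x s * Z.gcd x t * Z.gcd y s * Z.gcd y t.

Lemma height_eq P :
  height P = IZR (height_num (px P) (py P) (ps P) (pt_ P)) /
             IZR (height_den (px P) (py P) (ps P) (pt_ P)).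
Proof. reflexivity. Qed.

Lemma height_num_nonneg x y s t : (0 <= height_num x y s t)%Z.
Proof.
  unfold height_num; apply Z.le_trans with (2 := Z.le_max_l _ _),
    Z.le_trans with (2 := Z.le_max_l _ _), Z.abs_nonneg.
Qed.

Lemma height_num_pell_le (x s : Z) : (1 <= x)%Z -> (3 <= s)%Z ->
  (height_num x (x + 1) s (s - 1) <= (x + 1) * (x + 1) * (s * s))%Z.
Proof.
  intros Hx Hs; unfold height_num.
  assert (Hx2 : (x * x <= x * (x + 1) <= (x + 1) * (x + 1))%Z) by nia.
  assert (Hs2 : ((s - 1) * (s - 1) <= s * (s - 1) <= s * s)%Z) by nia.
  repeat apply Z.max_lub; rewrite Z.abs_eq by nia.
  - replace (x * x * s * (s - 1))%Z with ((x * x) * (s * (s - 1)))%Z by ring.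
    apply Z.mul_le_mono_nonneg; nia.
  - replace ((x + 1) * (x + 1) * s * (s - 1))%Z with (((x + 1) * (x + 1)) * (s * (s - 1)))%Z
      by ring.
    apply Z.mul_le_mono_nonneg; nia.
  - replace ((s - 1) * (s - 1) * x * (x + 1))%Z with ((x * (x + 1)) * ((s - 1) * (s - 1)))%Z
      by ring.
    apply Z.mul_le_mono_nonneg; nia.
  - replace (s * s * x * (x + 1))%Z with ((x * (x + 1)) * (s * s))%Z by ring.
    apply Z.mul_le_mono_nonneg; nia.
Qed.

Lemma pell_height_ineq (u v p q d x s : Z) :
  (1 <= u <= v)%Z -> (1 <= p <= q)%Z -> (3 <= d)%Z ->
  x = (u * v)%Z -> (x + 1 = p * q)%Z -> s = (d * u * p)%Z ->
  ((x + 1) * (x + 1) * (s * s) + (x + 1) * (x + 1) * (x * x) <=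
   (4 * d * d + 2) * (x * x) * (u * v * p * q))%Z.
Proof.
  intros Huv Hpq Hd Ex Ey Es.
  assert (Hpq2 : (p * q <= 2 * (u * v))%Z) by nia.
  assert (Hp2 : (p * p <= 2 * (v * v))%Z) by nia.
  assert (T1 : (p * q * (p * p) <= 4 * (u * v * (v * v)))%Z).
  { assert (p * q * (p * p) <= (2 * (u * v)) * (2 * (v * v)))%Z
      by (apply Z.mul_le_mono_nonneg; nia).
    lia. }
  assert (T2 : (p * q * (v * v) <= 2 * (u * v * (v * v)))%Z).
  { replace (2 * (u * v * (v * v)))%Z with ((2 * (u * v)) * (v * v))%Z by ring.
    apply Z.mul_le_mono_nonneg_r; nia. }
  rewrite Ey, Es, Ex.
  replace ((p * q) * (p * q) * (d * u * p * (d * u * p)) + (p * q) * (p * q) * (u * v * (u * v)))%Z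
    with ((u * u * p * q) * ((d * d) * (p * q * (p * p)) + p * q * (v * v)))%Z by ring.
  replace ((4 * d * d + 2) * (u * v * (u * v)) * (u * v * p * q))%Z with
    ((u * u * p * q) * ((d * d) * (4 * (u * v * (v * v))) + 2 * (u * v * (v * v))))%Z by ring.
  apply Z.mul_le_mono_nonneg_l; [nia|].
  assert ((d * d) * (p * q * (p * p)) <= (d * d) * (4 * (u * v * (v * v))))%Z
    by (apply Z.mul_le_mono_nonneg_l; nia).
  lia.
Qed.

Lemma Rmax_inv_sq_mul_le X S G0 G M K : 0 < X -> 0 < S -> 0 < G0 <= G -> 0 <= M ->
  M <= (X + 1) * (X + 1) * (S * S) ->
  (X + 1) * (X + 1) * (S * S) + (X + 1) * (X + 1) * (X * X) <= K * (X * X) * G0 ->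
  Rmax (1 / X) (1 / S) ^ 2 * (M / G) <= K.
Proof.
  intros HX HS HG HM0 HM HK.
  assert (Hmax : Rmax (1 / X) (1 / S) ^ 2 <= 1 / (X * X) + 1 / (S * S)).
  { assert (0 < 1 / (X * X)) by (apply Rdiv_lt_0_compat; nra).
    assert (0 < 1 / (S * S)) by (apply Rdiv_lt_0_compat; nra).
    apply Rmax_case_strong; intros _; simpl;
      replace ((1 / X) * ((1 / X) * 1)) with (1 / (X * X)) by (field; lra);
      replace ((1 / S) * ((1 / S) * 1)) with (1 / (S * S)) by (field; lra); lra. }
  assert (Hratio : M / G <= (X + 1) * (X + 1) * (S * S) / G0).
  { unfold Rdiv; apply Rle_trans with (M * / G0).
    - apply Rmult_le_compat_l, Rinv_le_contravar; lra.
    - apply Rmult_le_compat_r; [left; apply Rinv_0_lt_compat|]; lra. }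
  apply Rle_trans with ((1 / (X * X) + 1 / (S * S)) * ((X + 1) * (X + 1) * (S * S) / G0)).
  { apply Rmult_le_compat; auto.
    - apply pow_le, Rle_trans with (1 / X); [left; apply Rdiv_lt_0_compat; lra|apply Rmax_l].
    - unfold Rdiv; apply Rmult_le_pos; auto; left; apply Rinv_0_lt_compat; lra. }
  replace ((1 / (X * X) + 1 / (S * S)) * ((X + 1) * (X + 1) * (S * S) / G0)) with
    (((X + 1) * (X + 1) * (S * S) + (X + 1) * (X + 1) * (X * X)) / ((X * X) * G0))
    by (field; repeat split; lra).
  assert (HXG : 0 < X * X * G0) by (apply Rmult_lt_0_compat; nra).
  apply Rmult_le_reg_r with (X * X * G0); auto.
  unfold Rdiv; rewrite Rmult_assoc, Rinv_l by lra; lra.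
Qed.

(* Multiplication of q + u sqrt(m^2 - 1) by the fundamental unit m + sqrt(m^2 - 1). *)
Fixpoint pell (m : Z) (j : nat) : Z * Z :=
  match j with
  | O => (m, 1%Z)
  | S j' => let qu := pell m j' in
            (m * fst qu + (m * m - 1) * snd qu, fst qu + m * snd qu)%Z
  end.

Definition pell_d (m : Z) : Z := (m * m - 1)%Z.
Definition pell_q m j := fst (pell m j).
Definition pell_u m j := snd (pell m j).

Section PellPoints.

Variable m : Z.
Hypothesis Hm : (2 <= m)%Z.

Lemma pell_solution j :
  (pell_q m j * pell_q m j - pell_d m * pell_u m j * pell_u m j = 1 /\
   1 <= pell_q m j /\ Z.of_nat j + 1 <= pell_u m j)%Z.
Proof.
  unfold pell_q, pell_u, pell_d; induction j as [|j IH]; simpl; [lia|].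
  destruct IH as [H1 [H2 H3]].
  set (q := fst (pell m j)) in *; set (u := snd (pell m j)) in *.
  repeat split; [|nia|nia].
  assert (E : ((m * q + (m * m - 1) * u) * (m * q + (m * m - 1) * u) -
     (m * m - 1) * (q + m * u) * (q + m * u) = q * q - (m * m - 1) * u * u)%Z) by ring.
  lia.
Qed.

Lemma pell_u_lt_succ j : (pell_u m j < pell_u m (S j))%Z.
Proof.
  destruct (pell_solution j) as [_ [Hq Hu]]; unfold pell_u, pell_q in *; simpl; nia.
Qed.

Lemma pell_u_lt j k : (j < k)%nat -> (pell_u m j < pell_u m k)%Z.
Proof.
  induction 1 as [|k _ IH]; [apply pell_u_lt_succ|].
  pose proof (pell_u_lt_succ k); lia.
Qed.

Lemma pell_u_inj j k : pell_u m j = pell_u m k -> j = k.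
Proof.
  intro E; destruct (Nat.lt_total j k) as [L|[L|L]]; auto;
    apply pell_u_lt in L; lia.
Qed.

Definition pell_v j := (pell_d m * pell_u m j - pell_q m j)%Z.
Definition pell_p j := (pell_q m j - pell_u m j)%Z.
Definition pell_x j := (pell_u m j * pell_v j)%Z.
Definition pell_s j := (pell_d m * pell_u m j * pell_p j)%Z.

(* Since x + 1 = p q and s - 1 = v q (pell_coords), the four gcds in the height
   of this point are at least u, v, p and q. *)
Definition pell_pt j := mkPt (pell_x j) (pell_x j + 1) (pell_s j) (pell_s j - 1).

Lemma pell_d_ge3 : (3 <= pell_d m)%Z.
Proof. unfold pell_d; nia. Qed.

Lemma pell_q_le j : (pell_q m j <= (pell_d m - 1) * pell_u m j)%Z.
Proof.
  destruct (pell_solution j) as [H1 [H2 H3]]; pose proof pell_d_ge3.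
  set (q := pell_q m j) in *; set (u := pell_u m j) in *; set (d := pell_d m) in *.
  assert (Hsq : (d * u * u + 1 <= ((d - 1) * u) * ((d - 1) * u))%Z).
  { replace (((d - 1) * u) * ((d - 1) * u))%Z with
      ((d * (d - 3) + 1) * (u * u) + d * u * u)%Z by ring; nia. }
  destruct (Z_le_gt_dec q ((d - 1) * u)) as [|Hc]; auto.
  assert (((d - 1) * u + 1) * ((d - 1) * u + 1) <= q * q)%Z
    by (apply Z.mul_le_mono_nonneg; nia).
  nia.
Qed.

Lemma pell_coords j :
  let q := pell_q m j in let u := pell_u m j in let v := pell_v j in let p := pell_p j in
  (1 <= u /\ u <= v /\ 1 <= p /\ p <= q /\
   pell_x j + 1 = p * q /\ pell_s j - 1 = v * q /\ Z.of_nat j + 1 <= u)%Z.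
Proof.
  destruct (pell_solution j) as [H1 [H2 H3]].
  pose proof (pell_q_le j); pose proof pell_d_ge3.
  cbv zeta; unfold pell_x, pell_s, pell_v, pell_p; repeat split; nia.
Qed.

Lemma pell_pt_pos j : (1 <= pell_x j /\ 3 <= pell_s j /\
  Z.of_nat j + 1 <= pell_x j /\ Z.of_nat j + 1 <= pell_s j)%Z.
Proof.
  destruct (pell_coords j) as [Hu [Huv [Hp [_ [_ [_ Hj]]]]]]; pose proof pell_d_ge3.
  unfold pell_x, pell_s.
  assert (pell_u m j <= pell_u m j * pell_v j)%Z by nia.
  assert (pell_u m j <= pell_u m j * pell_p j)%Z by nia.
  assert (3 * (pell_u m j * pell_p j) <= pell_d m * (pell_u m j * pell_p j))%Z by nia.
  lia.
Qed.

Lemma pell_pt_valid j : valid (pell_pt j).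
Proof.
  destruct (pell_pt_pos j) as [Hx [Hs _]].
  unfold valid, pell_pt; simpl; repeat split; [| |lia].
  - replace (pell_x j + 1)%Z with (1 + 1 * pell_x j)%Z by ring.
    rewrite Z.gcd_add_mult_diag_r; apply Z.gcd_1_r.
  - rewrite Z.gcd_comm; replace (pell_s j) with (1 + 1 * (pell_s j - 1))%Z at 2 by ring.
    rewrite Z.gcd_add_mult_diag_r; apply Z.gcd_1_r.
Qed.

Lemma pell_pt_in_torus j : in_torus (pell_pt j).
Proof. destruct (pell_pt_pos j) as [Hx [Hs _]]; unfold in_torus, pell_pt; simpl; lia. Qed.

Lemma pell_pt_in_chart j : in_chart (pell_pt j).
Proof. destruct (pell_pt_pos j) as [Hx [Hs _]]; unfold in_chart, pell_pt; simpl; lia. Qed.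

Lemma pell_pt_neq_Q j : ~ isQ (pell_pt j).
Proof. unfold isQ, pell_pt; simpl; lia. Qed.

Lemma dist_pell_pt j :
  Defs.dist (pell_pt j) = Rmax (1 / IZR (pell_x j)) (1 / IZR (pell_s j)).
Proof.
  destruct (pell_pt_pos j) as [Hx [Hs _]].
  assert (X : 0 < IZR (pell_x j)) by (apply IZR_lt; lia).
  assert (S : 0 < IZR (pell_s j)) by (apply IZR_lt; lia).
  unfold Defs.dist, wcoord, zcoord, pell_pt; simpl; rewrite plus_IZR, minus_IZR.
  f_equal.
  - replace ((IZR (pell_x j) + 1) / IZR (pell_x j) - 1) with (1 / IZR (pell_x j))
      by (field; lra).
    apply Rabs_right; apply Rle_ge, Rlt_le, Rdiv_lt_0_compat; lra.
  - replace ((IZR (pell_s j) - 1) / IZR (pell_s j) - 1) with (- (1 / IZR (pell_s j)))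
      by (field; lra).
    rewrite Rabs_Ropp; apply Rabs_right; apply Rle_ge, Rlt_le, Rdiv_lt_0_compat; lra.
Qed.

Lemma dist_pell_pt_le j : 0 < Defs.dist (pell_pt j) <= 1 / (INR j + 1).
Proof.
  destruct (pell_pt_pos j) as [_ [_ [Hx Hs]]]; rewrite dist_pell_pt.
  assert (Hj : 0 < INR j + 1) by (pose proof (pos_INR j); lra).
  assert (Hx' : INR j + 1 <= IZR (pell_x j))
    by (rewrite INR_IZR_INZ, <- plus_IZR; apply IZR_le; lia).
  assert (Hs' : INR j + 1 <= IZR (pell_s j))
    by (rewrite INR_IZR_INZ, <- plus_IZR; apply IZR_le; lia).
  split.
  - eapply Rlt_le_trans; [|apply Rmax_l]; apply Rdiv_lt_0_compat; lra.
  - apply Rmax_lub; apply Rmult_le_compat_l, Rinv_le_contravar; lra.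
Qed.

Lemma pell_height_den_ge j :
  (pell_u m j * pell_v j * pell_p j * pell_q m j <=
   height_den (pell_x j) (pell_x j + 1) (pell_s j) (pell_s j - 1))%Z.
Proof.
  destruct (pell_coords j) as [Hu [Huv [Hp [Hpq [Ey [Et _]]]]]].
  destruct (pell_pt_pos j) as [Hx [Hs _]]; pose proof pell_d_ge3.
  unfold height_den; set (x := pell_x j) in *; set (s := pell_s j) in *.
  set (q := pell_q m j) in *; set (u := pell_u m j) in *.
  set (v := pell_v j) in *; set (p := pell_p j) in *.
  assert (Ex : x = (u * v)%Z) by reflexivity.
  assert (Es : s = (pell_d m * u * p)%Z) by reflexivity.
  assert (g1 : (u <= Z.gcd x s)%Z).
  { apply gcd_ge_divisor; try lia; [rewrite Ex; apply Z.divide_factor_l|].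
    rewrite Es; exists (pell_d m * p)%Z; ring. }
  assert (g2 : (v <= Z.gcd x (s - 1))%Z).
  { apply gcd_ge_divisor; try lia; [rewrite Ex; apply Z.divide_factor_r|].
    rewrite Et; apply Z.divide_factor_l. }
  assert (g3 : (p <= Z.gcd (x + 1) s)%Z).
  { apply gcd_ge_divisor; try lia; [rewrite Ey; apply Z.divide_factor_l|].
    rewrite Es; apply Z.divide_factor_r. }
  assert (g4 : (q <= Z.gcd (x + 1) (s - 1))%Z).
  { apply gcd_ge_divisor; try lia; [rewrite Ey; apply Z.divide_factor_r|].
    rewrite Et; apply Z.divide_factor_r. }
  assert (Huv0 : (0 <= u * v)%Z) by nia.
  assert (Huvp0 : (0 <= u * v * p)%Z) by nia.
  apply Z.mul_le_mono_nonneg; [lia| |lia|exact g4].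
  apply Z.mul_le_mono_nonneg; [lia| |lia|exact g3].
  apply Z.mul_le_mono_nonneg; [lia|exact g1|lia|exact g2].
Qed.

Lemma dist_sq_height_pell_pt_le j :
  Defs.dist (pell_pt j) ^ 2 * height (pell_pt j) <= IZR (4 * pell_d m * pell_d m + 2).
Proof.
  destruct (pell_coords j) as [Hu [Huv [Hp [Hpq [Ey _]]]]].
  destruct (pell_pt_pos j) as [Hx [Hs _]]; pose proof pell_d_ge3.
  pose proof (pell_height_den_ge j) as HG.
  rewrite dist_pell_pt, height_eq; unfold pell_pt; cbn [px py ps pt_].
  set (G0 := (pell_u m j * pell_v j * pell_p j * pell_q m j)%Z) in *.
  assert (HG0 : (0 < G0)%Z).
  { unfold G0; apply Z.mul_pos_pos; [|lia]; apply Z.mul_pos_pos; [|lia]; nia. }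
  assert (Hkey := pell_height_ineq _ _ _ _ _ (pell_x j) (pell_s j)
    (conj Hu Huv) (conj Hp Hpq) H eq_refl Ey eq_refl).
  apply (Rmax_inv_sq_mul_le _ _ (IZR G0)).
  - apply IZR_lt; lia.
  - apply IZR_lt; lia.
  - split; [apply IZR_lt|apply IZR_le]; lia.
  - apply IZR_le, height_num_nonneg.
  - rewrite <- plus_IZR, <- !mult_IZR; apply IZR_le, height_num_pell_le; lia.
  - fold G0 in Hkey; apply IZR_le in Hkey.
    repeat rewrite ?mult_IZR, ?plus_IZR in *; exact Hkey.
Qed.

Lemma pell_solution_R j :
  let q := IZR (pell_q m j) in let u := IZR (pell_u m j) in let d := IZR (pell_d m) in
  u <> 0 /\ q + 1 <> 0 /\ q * q - d * u * u = 1 /\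
  IZR (pell_x j) = u * (d * u - q) /\ IZR (pell_s j) = d * u * (q - u).
Proof.
  destruct (pell_solution j) as [H1 [H2 H3]]; cbv zeta; repeat split.
  - apply not_0_IZR; lia.
  - assert (0 < IZR (pell_q m j)) by (apply IZR_lt; lia); lra.
  - rewrite <- !mult_IZR, <- minus_IZR, H1; auto.
  - unfold pell_x, pell_v; rewrite mult_IZR, minus_IZR, mult_IZR; auto.
  - unfold pell_s, pell_p; rewrite !mult_IZR, minus_IZR; auto.
Qed.

(* The pullback vanishes at the distinct parameters r_j = u_j / (q_j + 1) of
   the Pell points, hence identically once it has more than 8 deg f of them. *)
Lemma pullback_eq0_of_tail f J :
  (forall j, (J <= j)%nat -> evalP f (pell_pt j) = 0) ->
  forall r, pullback (IZR (pell_d m)) f r = 0.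
Proof.
  intro Htail.
  set (r_ j := IZR (pell_u m j) / (IZR (pell_q m j) + 1)).
  apply (deg_le_eq0 _ _ (fun i => r_ (J + i)%nat) (deg_le_pullback _ f)).
  - intros i k _ _ Hik E; apply Hik.
    destruct (pell_solution_R (J + i)) as [A1 [A2 [A3 _]]].
    destruct (pell_solution_R (J + k)) as [B1 [B2 [B3 _]]].
    pose proof (conic_param_u _ _ _ A1 A2 A3) as Ui.
    pose proof (conic_param_u _ _ _ B1 B2 B3) as Uk.
    unfold r_ in E; rewrite E, Uk in Ui; apply eq_IZR, pell_u_inj in Ui; lia.
  - intros i _; unfold r_.
    destruct (pell_solution_R (J + i)) as [A1 [A2 [A3 [A4 A5]]]].
    destruct (pell_pt_pos (J + i)) as [Hx [Hs _]].
    rewrite pullback_conic_param, <- A4, <- A5 by auto.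
    rewrite bihom_peval by (apply not_0_IZR; lia).
    assert (E := Htail (J + i)%nat ltac:(lia)).
    unfold evalP, wcoord, zcoord, pell_pt in E; cbn [px py ps pt_] in E.
    rewrite plus_IZR, minus_IZR in E; rewrite E; ring.
Qed.

End PellPoints.

Lemma Z_coprime_mul_divide (a b n : Z) :
  (a | n)%Z -> (b | n)%Z -> Z.gcd b a = 1%Z -> (a * b | n)%Z.
Proof.
  intros [k Hk] Hb Hg; subst n.
  assert (Hk : (b | k)%Z) by (apply Z.gauss with a; auto; rewrite Z.mul_comm; auto).
  destruct Hk as [l Hl]; subst k; exists l; ring.
Qed.

Lemma gcd_mul_gcd_le (x s t : Z) : x <> 0%Z -> Z.gcd s t = 1%Z ->
  (Z.gcd x s * Z.gcd x t <= Z.abs x)%Z.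
Proof.
  intros Hx Hst; apply Z.divide_pos_le; [lia|].
  apply Z.divide_abs_r, Z_coprime_mul_divide; try apply Z.gcd_divide_l.
  apply Z.divide_1_r_nonneg; [apply Z.gcd_nonneg|]; rewrite <- Hst.
  apply Z.gcd_greatest; eapply Z.divide_trans;
    [apply Z.gcd_divide_r|apply Z.gcd_divide_r|apply Z.gcd_divide_l|apply Z.gcd_divide_r].
Qed.

Lemma gcd_pos (a b : Z) : a <> 0%Z -> (1 <= Z.gcd a b)%Z.
Proof. intro Ha; pose proof (Z.gcd_nonneg a b); pose proof (Z.gcd_eq_0_l a b); lia. Qed.

Lemma gcd_abs1_l (a b : Z) : Z.abs a = 1%Z -> Z.gcd a b = 1%Z.
Proof. intro Ha; rewrite <- Z.gcd_abs_l, Ha; apply Z.gcd_1_l. Qed.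

Lemma height_den_pos (x y s t : Z) : x <> 0%Z -> y <> 0%Z -> (1 <= height_den x y s t)%Z.
Proof.
  intros Hx Hy; unfold height_den.
  pose proof (gcd_pos x s Hx); pose proof (gcd_pos x t Hx).
  pose proof (gcd_pos y s Hy); pose proof (gcd_pos y t Hy).
  repeat (apply (Z.mul_le_mono_nonneg 1 _ 1); try lia).
Qed.

Lemma mul_le_of_sq_le (X Y S T G M : Z) : (1 <= X)%Z -> (1 <= Y)%Z -> (1 <= S)%Z -> (1 <= T)%Z ->
  (0 <= G)%Z -> (G * G <= X * Y * S * T)%Z ->
  (X * X * (S * T) <= M)%Z -> (S * S * (X * Y) <= M)%Z -> (X * S * G <= M)%Z.
Proof.
  intros HX HY HS HT HG HGG HMx HMs; apply Z.square_le_simpl_nonneg; [lia|].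
  apply Z.le_trans with ((X * X * (S * T)) * (S * S * (X * Y)))%Z.
  - replace ((X * X * (S * T)) * (S * S * (X * Y)))%Z with ((X * S) * (X * S) * (X * Y * S * T))%Z
      by ring.
    replace (X * S * G * (X * S * G))%Z with ((X * S) * (X * S) * (G * G))%Z by ring.
    apply Z.mul_le_mono_nonneg_l; nia.
  - apply Z.mul_le_mono_nonneg; nia.
Qed.

Definition dist_witness (x y s t A : Z) : Prop :=
  (y <> x /\ A = Z.abs x) \/ (t <> s /\ A = Z.abs s).

Section HeightLowerBound.

Variables x y s t : Z.
Hypotheses (Hx : x <> 0%Z) (Hy : y <> 0%Z) (Hs : s <> 0%Z) (Ht : t <> 0%Z).
Hypotheses (Hxy : Z.gcd x y = 1%Z) (Hst : Z.gcd s t = 1%Z).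

Lemma height_den_sq_le :
  (height_den x y s t * height_den x y s t <= Z.abs x * Z.abs y * Z.abs s * Z.abs t)%Z.
Proof.
  assert (g1 := gcd_mul_gcd_le x s t Hx Hst).
  assert (g2 := gcd_mul_gcd_le y s t Hy Hst).
  assert (g3 := gcd_mul_gcd_le s x y Hs Hxy).
  assert (g4 := gcd_mul_gcd_le t x y Ht Hxy).
  rewrite !(Z.gcd_comm s), !(Z.gcd_comm t) in *.
  pose proof (gcd_pos x s Hx); pose proof (gcd_pos x t Hx).
  pose proof (gcd_pos y s Hy); pose proof (gcd_pos y t Hy).
  unfold height_den; set (a := Z.gcd x s) in *; set (b := Z.gcd x t) in *.
  set (c := Z.gcd y s) in *; set (e := Z.gcd y t) in *.
  replace (a * b * c * e * (a * b * c * e))%Z with ((a * b) * (c * e) * (a * c) * (b * e))%Z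
    by ring.
  assert (0 <= a * b * (c * e))%Z by nia.
  assert (0 <= a * b * (c * e) * (a * c))%Z by nia.
  apply Z.mul_le_mono_nonneg; [lia| |nia|exact g4].
  apply Z.mul_le_mono_nonneg; [lia| |nia|exact g3].
  apply Z.mul_le_mono_nonneg; [nia|exact g1|nia|exact g2].
Qed.

Lemma height_num_ge :
  (Z.abs x * Z.abs x * (Z.abs s * Z.abs t) <= height_num x y s t /\
   Z.abs s * Z.abs s * (Z.abs x * Z.abs y) <= height_num x y s t)%Z.
Proof.
  unfold height_num; split.
  - apply Z.le_trans with (2 := Z.le_max_l _ _); apply Z.le_trans with (2 := Z.le_max_l _ _).
    rewrite !Z.abs_mul; lia.
  - apply Z.le_trans with (2 := Z.le_max_r _ _); apply Z.le_trans with (2 := Z.le_max_r _ _).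
    rewrite !Z.abs_mul; lia.
Qed.

(* When w = 1, i.e. y = x, gcd(x, y) = 1 forces |x| = 1 and the denominator is 1;
   symmetrically when z = 1. *)
Lemma height_witness : ~ (y = x /\ t = s) ->
  exists A B, dist_witness x y s t A /\ dist_witness x y s t B /\
              (A * B * height_den x y s t <= height_num x y s t)%Z.
Proof.
  intro HQ; destruct height_num_ge as [Mx Ms].
  destruct (Z.eq_dec y x) as [Eyx|Eyx]; [|destruct (Z.eq_dec t s) as [Ets|Ets]].
  - assert (Ets : t <> s) by (intro; apply HQ; auto).
    assert (Ax : Z.abs x = 1%Z) by (rewrite <- Z.gcd_diag; rewrite <- Eyx at 2; auto).
    assert (Ay : Z.abs y = 1%Z) by (rewrite Eyx; auto).
    assert (HG : height_den x y s t = 1%Z)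
      by (unfold height_den; rewrite !gcd_abs1_l by auto; ring).
    exists (Z.abs s), (Z.abs s); split; [right; auto|split; [right; auto|]].
    rewrite HG, Z.mul_1_r; rewrite Ax, Ay, Z.mul_1_r in Ms; exact Ms.
  - assert (As : Z.abs s = 1%Z) by (rewrite <- Z.gcd_diag; rewrite <- Ets at 2; auto).
    assert (At : Z.abs t = 1%Z) by (rewrite Ets; auto).
    assert (HG : height_den x y s t = 1%Z).
    { unfold height_den; rewrite !(Z.gcd_comm _ s), !(Z.gcd_comm _ t), !gcd_abs1_l by auto; ring. }
    exists (Z.abs x), (Z.abs x); split; [left; auto|split; [left; auto|]].
    rewrite HG, Z.mul_1_r; rewrite As, At, Z.mul_1_r in Mx; exact Mx.
  - exists (Z.abs x), (Z.abs s); split; [left; auto|split; [right; auto|]].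
    apply (mul_le_of_sq_le _ (Z.abs y) _ (Z.abs t)); try lia.
    + pose proof (height_den_pos x y s t Hx Hy); lia.
    + apply height_den_sq_le.
Qed.

End HeightLowerBound.

Lemma Rabs_div_sub1_ge (x y : Z) : x <> 0%Z -> y <> x ->
  1 / IZR (Z.abs x) <= Rabs (IZR y / IZR x - 1).
Proof.
  intros Hx Hyx.
  assert (X : 0 < IZR (Z.abs x)) by (apply IZR_lt; lia).
  assert (Y : 1 <= IZR (Z.abs (y - x))) by (apply IZR_le; lia).
  replace (IZR y / IZR x - 1) with (IZR (y - x) / IZR x)
    by (rewrite minus_IZR; field; apply not_0_IZR; auto).
  unfold Rdiv; rewrite Rabs_mult, Rabs_inv, !Rabs_Zabs.
  apply Rmult_le_compat_r; [left; apply Rinv_0_lt_compat|]; lra.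
Qed.

Lemma one_le_sq_mul d A B H : 0 < A -> 0 < B -> 1 / A <= d -> 1 / B <= d -> A * B <= H ->
  1 <= d ^ 2 * H.
Proof.
  intros HA HB HdA HdB HH.
  assert (0 < 1 / A) by (apply Rdiv_lt_0_compat; lra).
  assert (0 < 1 / B) by (apply Rdiv_lt_0_compat; lra).
  apply Rle_trans with ((1 / A) * (1 / B) * (A * B)); [right; field; lra|].
  simpl; rewrite Rmult_1_r.
  apply Rmult_le_compat; [nra|nra|apply Rmult_le_compat; lra|auto].
Qed.

Lemma dist_lt1_nonzero P : in_chart P -> Defs.dist P < 1 -> py P <> 0%Z /\ pt_ P <> 0%Z.
Proof.
  destruct P as [x y s t]; unfold in_chart, Defs.dist, wcoord, zcoord; cbn [px py ps pt_].
  intros _ Hd; split; intro E; subst;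
    [assert (H := Rmax_l (Rabs (IZR 0 / IZR x - 1)) (Rabs (IZR t / IZR s - 1)))
    |assert (H := Rmax_r (Rabs (IZR y / IZR x - 1)) (Rabs (IZR 0 / IZR s - 1)))];
    rewrite Rdiv_0_l, Rminus_0_l, Rabs_Ropp, Rabs_R1 in *; lra.
Qed.

Lemma dist_witness_le P A :
  px P <> 0%Z -> ps P <> 0%Z -> dist_witness (px P) (py P) (ps P) (pt_ P) A ->
  (1 <= A)%Z /\ 1 / IZR A <= Defs.dist P.
Proof.
  destruct P as [x y s t]; unfold Defs.dist, wcoord, zcoord; cbn [px py ps pt_].
  intros Hx Hs [[Hyx ->]|[Hts ->]]; split; try lia.
  - apply Rle_trans with (2 := Rmax_l _ _), Rabs_div_sub1_ge; auto.
  - apply Rle_trans with (2 := Rmax_r _ _), Rabs_div_sub1_ge; auto.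
Qed.

Lemma dist_sq_height_ge1 P : valid P -> in_chart P -> ~ isQ P -> Defs.dist P < 1 ->
  0 < Defs.dist P /\ 1 <= Defs.dist P ^ 2 * height P.
Proof.
  intros [Hxy [Hst _]] [Hx Hs] HQ Hd.
  destruct (dist_lt1_nonzero P (conj Hx Hs) Hd) as [Hy Ht].
  destruct (height_witness _ _ _ _ Hx Hy Hs Ht Hxy Hst HQ) as [A [B [HA [HB HAB]]]].
  destruct (dist_witness_le P A Hx Hs HA) as [A1 HdA].
  destruct (dist_witness_le P B Hx Hs HB) as [B1 HdB].
  pose proof (height_den_pos _ _ (ps P) (pt_ P) Hx Hy) as G1.
  assert (RA : 0 < IZR A) by (apply IZR_lt; lia).
  assert (RB : 0 < IZR B) by (apply IZR_lt; lia).
  assert (RG : 0 < IZR (height_den (px P) (py P) (ps P) (pt_ P))) by (apply IZR_lt; lia).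
  split; [apply Rlt_le_trans with (1 / IZR A); [apply Rdiv_lt_0_compat|]; lra|].
  apply (one_le_sq_mul _ (IZR A) (IZR B)); auto.
  rewrite height_eq; apply Rmult_le_reg_r with (1 := RG).
  rewrite <- !mult_IZR; unfold Rdiv; rewrite Rmult_assoc, Rinv_l, Rmult_1_r by lra.
  apply IZR_le, HAB.
Qed.

Lemma pell_d_R_ge3 m : (2 <= m)%Z -> 3 <= IZR (pell_d m).
Proof. intro Hm; apply IZR_le, pell_d_ge3, Hm. Qed.

Lemma bihom_eq0_on_conic f m : (2 <= m)%Z -> (forall r, pullback (IZR (pell_d m)) f r = 0) ->
  forall x, 0 < x ->
  bihom f (x + 1) x (conic_root (IZR (pell_d m)) x - 1) (conic_root (IZR (pell_d m)) x) = 0.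
Proof.
  intros Hm Hpull x Hx.
  destruct (conic_param_surj _ _ (pell_d_R_ge3 m Hm) Hx) as [q [u [Hu [Hq [E1 [E2 E3]]]]]].
  assert (E := Hpull (u / (q + 1))).
  rewrite pullback_conic_param, E2, E3 in E by lra.
  assert (L : ((2 / (q + 1)) ^ 2) ^ pdeg f <> 0).
  { apply pow_nonzero, pow_nonzero, Rgt_not_eq, Rdiv_lt_0_compat; lra. }
  destruct (Rmult_integral _ _ E) as [E'|E']; auto.
  destruct (Rmult_integral _ _ E'); contradiction.
Qed.

(* As m varies the conics s (s - 1) = (m^2 - 1) x (x + 1) meet each vertical
   line x = x0 in infinitely many points. *)
Lemma bihom_eq0_of_pullbacks f :
  (forall m, (2 <= m)%Z -> forall r, pullback (IZR (pell_d m)) f r = 0) ->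
  forall x, 0 < x -> forall s, bihom f (x + 1) x (s - 1) s = 0.
Proof.
  intros Hpull x Hx.
  set (m_ i := (2 + Z.of_nat i)%Z).
  apply (deg_le_eq0 (2 * 1 * pdeg f) _ (fun i => conic_root (IZR (pell_d (m_ i))) x)).
  - apply (deg_le_bihom f 1); try apply deg_le_const; [|apply deg_le_id].
    apply (deg_le_ext _ (fun s => s + -1)).
    + apply deg_le_add; [apply deg_le_id|apply deg_le_const].
    + intro; ring.
  - assert (Hd : forall i, 0 <= IZR (pell_d (m_ i)))
      by (intro; apply IZR_le; unfold pell_d, m_; nia).
    intros i k _ _ Hik E; apply conic_root_inj in E; auto.
    apply eq_IZR in E; unfold pell_d, m_ in E; nia.
  - intros i _; apply bihom_eq0_on_conic; [unfold m_; lia|apply Hpull; unfold m_; lia|exact Hx].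
Qed.

Lemma peval_eq0_of_bihom f : (forall x, 0 < x -> forall s, bihom f (x + 1) x (s - 1) s = 0) ->
  forall w z, 1 < w -> 1 < z -> peval f w z = 0.
Proof.
  intros Hbihom w z Hw Hz.
  assert (X0 : 1 / (w - 1) <> 0) by (apply Rgt_not_eq, Rdiv_lt_0_compat; lra).
  assert (S0 : 1 / (1 - z) <> 0)
    by (unfold Rdiv; rewrite Rmult_1_l; apply Rinv_neq_0_compat; lra).
  assert (E := Hbihom (1 / (w - 1)) ltac:(apply Rdiv_lt_0_compat; lra) (1 / (1 - z))).
  rewrite bihom_peval in E by auto.
  replace ((1 / (w - 1) + 1) / (1 / (w - 1))) with w in E by (field; lra).
  replace ((1 / (1 - z) - 1) / (1 / (1 - z))) with z in E by (field; lra).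
  destruct (Rmult_integral _ _ E) as [E'|E']; auto.
  destruct (Rmult_integral _ _ E'); apply (pow_nonzero _ (pdeg f)) in X0, S0; contradiction.
Qed.

Lemma pell_pt_nonvanishing f : pnonzero f -> exists m, (2 <= m)%Z /\
  forall N, exists j, (N <= j)%nat /\ evalP f (pell_pt m j) <> 0.
Proof.
  intro Hf; apply NNPP; intro Hnone.
  assert (Htail : forall m, (2 <= m)%Z ->
            exists J, forall j, (J <= j)%nat -> evalP f (pell_pt m j) = 0).
  { intros m Hm; apply NNPP; intro HJ; apply Hnone; exists m; split; auto.
    intro N; apply NNPP; intro HN; apply HJ; exists N; intros j Hj.
    apply NNPP; intro E; apply HN; exists j; auto. }
  assert (Hcoef := peval_coef_eq0 f (peval_eq0_of_bihom f (bihom_eq0_of_pullbacks f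
    (fun m Hm => let (J, HJ) := Htail m Hm in pullback_eq0_of_tail m Hm f J HJ)))).
  destruct Hf as [i [j [Hi [Hj Hc]]]]; apply Hc, eqR_Qeq.
  rewrite Hcoef by auto; unfold Q2R; simpl; ring.
Qed.

Lemma Rpower_gt_of_lt_exp B c d : 1 <= B -> c < 0 -> 0 < d -> d < exp (ln B / c) ->
  B < Rpower d c.
Proof.
  intros HB Hc Hd Hdc; unfold Rpower.
  assert (Hln : ln d < ln B / c) by (rewrite <- (ln_exp (ln B / c)); apply ln_increasing; auto).
  apply Rmult_lt_compat_l with (r := - c) in Hln; [|lra].
  replace (- c * (ln B / c)) with (- ln B) in Hln by (field; lra).
  rewrite <- (exp_ln B) at 1 by lra; apply exp_increasing; lra.
Qed.

Lemma Rpower_split_sq d g : 0 < d -> Rpower d g = Rpower d (g - 2) * d ^ 2.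
Proof.
  intro Hd; rewrite <- (Rpower_pow 2 d Hd), <- Rpower_plus; simpl INR; f_equal; ring.
Qed.

(* d^g H = d^(g-2) (d^2 H) >= d^(g-2), which is unbounded as d -> 0 when g < 2. *)
Lemma admissible_ge2 V g : admissible V g -> 2 <= g.
Proof.
  intros [Hg [Pn [HP [Hcv [B HB]]]]].
  destruct (Rle_or_lt 2 g) as [|Hlt]; auto; exfalso.
  set (B' := Rmax B 1).
  assert (HB' : 1 <= B') by apply Rmax_r.
  set (delta := Rmin (exp (ln B' / (g - 2))) 1).
  assert (Hdelta : 0 < delta) by (apply Rmin_pos; [apply exp_pos|lra]).
  destruct (Hcv delta Hdelta) as [N HN].
  specialize (HN N (le_n N)); unfold R_dist in HN; rewrite Rminus_0_r in HN.
  destruct (HP N) as [_ [Hv [Hc HQ]]].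
  set (d := Defs.dist (Pn N)) in *.
  assert (Hd1 : d < 1) by (apply Rabs_def2 in HN; pose proof (Rmin_r (exp (ln B' / (g - 2))) 1);
                           unfold delta in *; lra).
  destruct (dist_sq_height_ge1 (Pn N) Hv Hc HQ Hd1) as [Hd0 Hlow]; fold d in Hd0, Hlow.
  assert (Hsmall : d < exp (ln B' / (g - 2))).
  { rewrite Rabs_right in HN by lra; eapply Rlt_le_trans; [apply HN|apply Rmin_l]. }
  assert (Hbig := Rpower_gt_of_lt_exp B' (g - 2) d HB' ltac:(lra) Hd0 Hsmall).
  assert (HBN := Rle_trans _ _ _ (Rle_abs _) (HB N)); fold d in HBN.
  rewrite (Rpower_split_sq d g Hd0), Rmult_assoc in HBN.
  assert (Rpower d (g - 2) <= Rpower d (g - 2) * (d ^ 2 * height (Pn N))).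
  { rewrite <- (Rmult_1_r (Rpower d (g - 2))) at 1.
    apply Rmult_le_compat_l; [left; apply exp_pos|auto]. }
  assert (B <= B') by apply Rmax_l; lra.
Qed.

Lemma height_nonneg P : px P <> 0%Z -> py P <> 0%Z -> 0 <= height P.
Proof.
  intros Hx Hy; rewrite height_eq.
  apply Rmult_le_pos; [apply IZR_le, height_num_nonneg|].
  left; apply Rinv_0_lt_compat, IZR_lt.
  pose proof (height_den_pos _ _ (ps P) (pt_ P) Hx Hy); lia.
Qed.

Lemma Un_cv_0_of_le_inv_succ (a : nat -> R) :
  (forall n, 0 <= a n <= 1 / (INR n + 1)) -> Un_cv a 0.
Proof.
  intros Ha eps Heps; destruct (archimed (/ eps)) as [A1 _].
  assert (Hi : 0 < / eps) by (apply Rinv_0_lt_compat; auto).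
  exists (Z.to_nat (up (/ eps))); intros n Hn; unfold R_dist; rewrite Rminus_0_r.
  destruct (Ha n) as [Ha0 Ha1]; rewrite Rabs_right by lra.
  assert (Hup : INR (Z.to_nat (up (/ eps))) = IZR (up (/ eps))).
  { rewrite INR_IZR_INZ, Z2Nat.id; auto; apply le_IZR; lra. }
  assert (INR (Z.to_nat (up (/ eps))) <= INR n) by (apply le_INR; lia).
  pose proof (pos_INR n).
  apply Rle_lt_trans with (1 / (INR n + 1)); auto.
  apply Rmult_lt_reg_r with (INR n + 1); [lra|].
  replace (1 / (INR n + 1) * (INR n + 1)) with 1 by (field; lra).
  apply Rmult_lt_reg_l with (/ eps); auto.
  rewrite <- Rmult_assoc, Rinv_l, Rmult_1_l, Rmult_1_r by lra; lra.
Qed.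

Lemma pell_admissible V m (sig : nat -> nat) : (2 <= m)%Z -> (forall n, (n <= sig n)%nat) ->
  (forall n, V (pell_pt m (sig n))) -> admissible V 2.
Proof.
  intros Hm Hsig HV; split; [lra|]; exists (fun n => pell_pt m (sig n)); split; [|split].
  - intro n; split; [apply HV|]; split; [|split];
      [apply pell_pt_valid|apply pell_pt_in_chart|apply pell_pt_neq_Q]; auto.
  - apply Un_cv_0_of_le_inv_succ; intro n.
    destruct (dist_pell_pt_le m Hm (sig n)) as [D1 D2]; split; [lra|].
    eapply Rle_trans; [apply D2|].
    pose proof (le_INR _ _ (Hsig n)); pose proof (pos_INR n).
    apply Rmult_le_compat_l, Rinv_le_contravar; lra.
  - exists (IZR (4 * pell_d m * pell_d m + 2)); intro n.
    destruct (dist_pell_pt_le m Hm (sig n)) as [D1 _].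
    destruct (pell_pt_pos m Hm (sig n)) as [X1 _].
    replace 2 with (INR 2) by (simpl; ring); rewrite Rpower_pow by auto; simpl INR.
    rewrite Rabs_right; [apply dist_sq_height_pell_pt_le; auto|].
    apply Rle_ge, Rmult_le_pos; [apply pow_le; lra|].
    apply height_nonneg; unfold pell_pt; cbn [px py]; lia.
Qed.

Lemma alpha_ess_le2 S : dense_family S -> alpha_le (dopen S) 2.
Proof.
  intros [f [Hin Hnz]] b Hb; exists 2; split; [|lra].
  destruct (pell_pt_nonvanishing f Hnz) as [m [Hm Hinf]].
  destruct (choice _ Hinf) as [sig Hsig].
  apply (pell_admissible _ m sig Hm); [apply Hsig|].
  intro n; destruct (Hsig n) as [_ Hne]; split; [|split];
    [apply pell_pt_valid|apply pell_pt_in_torus|exists f]; auto.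
Qed.

Definition poly_one : poly2 := mkPoly2 0 (fun _ _ => 1%Q).

Lemma poly_one_nonzero : pnonzero poly_one.
Proof. exists 0%nat, 0%nat; simpl; repeat split; auto; discriminate. Qed.

Lemma evalP_one P : evalP poly_one P = 1.
Proof. unfold evalP, peval, Q2R; simpl; field. Qed.

Theorem mainTheorem1 :
  alpha_eq Y4 2 /\ alpha_ess_eq 2 /\ (forall S : list poly2, ~ locally_accumulating S).
Proof.
  assert (Hone : dense_family (poly_one :: nil))
    by (exists poly_one; split; [left; auto|apply poly_one_nonzero]).
  split; [|split].
  - split; [|intros g; apply admissible_ge2].
    intros b Hb; exists 2; split; [|lra].
    apply (pell_admissible _ 2 (fun n => n)); [lia|auto|intro n; apply pell_pt_valid; lia].
  - split; [apply alpha_ess_le2|].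
    intros b Hb; exists (poly_one :: nil); split; auto.
    exists 2; split; auto; intro g; apply admissible_ge2.
  - intros S [a [[Hle Hge] Hacc]].
    assert (Hdense : dense_in_closed S (poly_one :: nil)).
    { intros g Hg P HP; apply Hg; auto; destruct HP as [Hv [Ht _]].
      split; [auto|split; [auto|]].
      exists poly_one; split; [left; auto|rewrite evalP_one; lra]. }
    destruct (Hacc _ Hdense) as [g [Hg Hga]]; pose proof (admissible_ge2 _ _ Hg).
    destruct (Hge 2 ltac:(lra)) as [S' [HS' [c [Hc Hc']]]].
    destruct (alpha_ess_le2 S' HS' c Hc) as [g' [Hg' Hg'c]].
    pose proof (Hc' g' Hg'); lra.
Qed.
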